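(* Let $R$ be a subring of a ring $S$, and assume that every semiprime factor ring of $R$ and of $S$ is left or right Goldie and that the prime radical of every factor ring of $R$ and of $S$ is nilpotent. Then $\lambda$ is a left adjoint to $\rho$ if and only if for all $P\in\operatorname{Spec} S$ and $Q\in\operatorname{Spec} R$, $Q^S\subseteq P$ implies $Q\subseteq\sqrt{P\cap R}$.
   Context: $\operatorname{Spec}$ carries the Zariski topology, closed sets $V_A(X)=\{P\in\operatorname{Spec} A:P\supseteq X\}$; for $U\subseteq\operatorname{Spec} A$, $I(U)$ is the intersection of the primes in $U$; $\sqrt{K}$ is the prime radical of an ideal $K$. For an ideal $I$ of $R$, $I^S=\operatorname{ann}_S(S/SI)$. The functor $\lambda$ sends a closed $V\subseteq\operatorname{Spec} S$ to $V_R(I(V)\cap R)$; the functor $\rho$ sends a closed $V\subseteq\operatorname{Spec} R$ to $V_S(I(V)^S)$. ''$\lambda$ is a left adjoint to $\rho$'' means $\lambda U\subseteq V\iff U\subseteq\rho V$ for all closed $U\subseteq\operatorname{Spec} S$, $V\subseteq\operatorname{Spec} R$. *)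

(* Noncommutative (associative, unital) rings are
   mathcomp [pzRingType]s (the zero ring is allowed). Ideals and subsets
   are Prop-valued predicates. *)
From mathcomp Require Import all_boot all_algebra.
Set Implicit Arguments. Unset Strict Implicit. Unset Printing Implicit Defensive.
Import GRing.Theory.
Local Open Scope ring_scope.

Section RingDefs.
Variable A : pzRingType.

Definition incl (X Y : A -> Prop) : Prop := forall x, X x -> Y x.

Definition is_ideal (I : A -> Prop) : Prop :=
  [/\ I 0, (forall a b, I a -> I b -> I (a - b)),
      (forall r a, I a -> I (r * a)) & (forall r a, I a -> I (a * r))].

Definition is_right_ideal (I : A -> Prop) : Prop :=
  [/\ I 0, (forall a b, I a -> I b -> I (a - b)) & (forall r a, I a -> I (a * r))].

Definition is_left_ideal (I : A -> Prop) : Prop :=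
  [/\ I 0, (forall a b, I a -> I b -> I (a - b)) & (forall r a, I a -> I (r * a))].

Definition is_prime (P : A -> Prop) : Prop :=
  [/\ is_ideal P, ~ P 1 &
      forall I J, is_ideal I -> is_ideal J ->
        (forall a b, I a -> J b -> P (a * b)) -> incl I P \/ incl J P].

(* Zariski closed sets V_A(X) of Spec A; subsets of Spec A are predicates
   on ideals *)
Definition VZ (X : A -> Prop) : (A -> Prop) -> Prop :=
  fun P => is_prime P /\ incl X P.

Definition closed_spec (U : (A -> Prop) -> Prop) : Prop :=
  exists X : A -> Prop, forall P, U P <-> VZ X P.

Definition Iof (U : (A -> Prop) -> Prop) : A -> Prop :=
  fun x => forall P, U P -> is_prime P -> P x.

Definition prime_rad (K : A -> Prop) : A -> Prop := Iof (VZ K).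

Definition ring_prime_rad : A -> Prop := prime_rad (fun x => x = 0).

Definition semiprime_ring : Prop := forall x, ring_prime_rad x -> x = 0.

Definition nilpotent_ideal (N : A -> Prop) : Prop :=
  exists n : nat, (0 < n)%N /\
    forall a : 'I_n -> A, (forall k, N (a k)) -> \prod_(k < n) a k = 0.

Definition right_ann (X : A -> Prop) : A -> Prop :=
  fun t => forall x, X x -> x * t = 0.
Definition left_ann (X : A -> Prop) : A -> Prop :=
  fun t => forall x, X x -> t * x = 0.

(* ACC on annihilators (given as the image of an annihilator operator) *)
Definition acc_ann (ann : (A -> Prop) -> A -> Prop) : Prop :=
  forall C : nat -> A -> Prop,
    (forall n, exists Y, forall t, C n t <-> ann Y t) ->
    (forall n, incl (C n) (C n.+1)) ->
    exists N, forall m, (N <= m)%N -> incl (C m) (C N).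

Definition independent_family (J : nat -> A -> Prop) : Prop :=
  forall n (x : 'I_n -> A), (forall k : 'I_n, J k (x k)) ->
    \sum_(k < n) x k = 0 -> forall k, x k = 0.

(* finite uniform (Goldie) dimension: no infinite direct sum of nonzero
   one-sided ideals *)
Definition no_inf_direct_sum (isid : (A -> Prop) -> Prop) : Prop :=
  forall J : nat -> A -> Prop,
    (forall n, isid (J n)) -> (forall n, exists x, J n x /\ x <> 0) ->
    ~ independent_family J.

Definition right_goldie : Prop :=
  no_inf_direct_sum is_right_ideal /\ acc_ann right_ann.
Definition left_goldie : Prop :=
  no_inf_direct_sum is_left_ideal /\ acc_ann left_ann.

End RingDefs.

(* Hypotheses of the paper, for the ring A: every factor ring of A is,
   up to isomorphism, a surjective image g : A -> T. *)
Definition semiprime_factors_goldie (A : pzRingType) : Prop :=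
  forall (T : pzRingType) (g : {rmorphism A -> T}), (forall t : T, exists a, g a = t) ->
    semiprime_ring T -> left_goldie T \/ right_goldie T.

Definition factors_nilpotent_radical (A : pzRingType) : Prop :=
  forall (T : pzRingType) (g : {rmorphism A -> T}), (forall t : T, exists a, g a = t) ->
    nilpotent_ideal (@ring_prime_rad T).



Section SubringDefs.
(* R is a subring of S via the injective ring morphism f *)
Variables (R S : pzRingType) (f : {rmorphism R -> S}).

(* S I : the left ideal of S generated by f(I) *)
Definition left_gen (I : R -> Prop) : S -> Prop :=
  fun x => exists n (s : 'I_n -> S) (i : 'I_n -> R),
    (forall k, I (i k)) /\ x = \sum_(k < n) s k * f (i k).

(* I^S = ann_S (S / S I) *)
Definition ext_ideal (I : R -> Prop) : S -> Prop :=
  fun s => forall x : S, left_gen I (s * x).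

Definition contract (P : S -> Prop) : R -> Prop := fun r => P (f r).

Definition lam (U : (S -> Prop) -> Prop) : (R -> Prop) -> Prop :=
  VZ (contract (Iof U)).
Definition rho (V : (R -> Prop) -> Prop) : (S -> Prop) -> Prop :=
  VZ (ext_ideal (Iof V)).

Definition left_adjoint_lam_rho : Prop :=
  forall (U : (S -> Prop) -> Prop) (V : (R -> Prop) -> Prop),
    closed_spec U -> closed_spec V ->
    ((forall Q, lam U Q -> V Q) <-> (forall P, U P -> rho V P)).

End SubringDefs.

(* Adjointness applied to V(P) and V(Q) gives the prime condition at once.
   Conversely, lambda U <= V implies U <= rho V whenever prime radicals are
   nilpotent modulo ideals of R: for P in U the radical N of P /\ R satisfies
   N^n <= P /\ R, hence (N^S)^n <= (P /\ R)^S <= P, so I(V)^S <= N^S <= P.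
   For the other implication, Goldie's theorem (a semiprime ring with ACC on
   annihilators has finitely many primes meeting in 0) shows that the
   semiprime ideals I(U) and I(V) contain a finite product of primes lying
   over them.  Primeness selects such a prime P1 over I(U) with P1 /\ R <= Q,
   and a prime Q1 over I(V) with Q1^S <= P1; the hypothesis then gives
   I(V) <= Q1 <= sqrt(P1 /\ R) <= Q. *)

From HB Require Import structures.
From mathcomp Require Import all_boot all_algebra.
From mathcomp Require Import boolp.
From Stdlib Require List.
Set Implicit Arguments. Unset Strict Implicit. Unset Printing Implicit Defensive.
Import GRing.Theory.
Local Open Scope ring_scope.

Section Ideals.
Variable A : pzRingType.
Implicit Types (I J K P Q Z : A -> Prop) (Is : seq (A -> Prop)).

Section IdealClosure.
Variables (K : A -> Prop) (idK : is_ideal K).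

Lemma ideal0 : K 0. Proof. by case: idK. Qed.

Lemma idealB a b : K a -> K b -> K (a - b).
Proof. by case: idK => _ h _ _; apply: h. Qed.

Lemma idealN a : K a -> K (- a).
Proof. by move=> Ka; rewrite -sub0r; apply: idealB => //; apply: ideal0. Qed.

Lemma idealD a b : K a -> K b -> K (a + b).
Proof. by move=> Ka Kb; rewrite -[b]opprK; apply: idealB => //; apply: idealN. Qed.

Lemma idealMl r a : K a -> K (r * a). Proof. by case: idK => _ _ h _; apply: h. Qed.

Lemma idealMr r a : K a -> K (a * r). Proof. by case: idK => _ _ _ h; apply: h. Qed.

Lemma ideal_sum n (F : 'I_n -> A) : (forall k, K (F k)) -> K (\sum_(k < n) F k).
Proof. by move=> h; apply: (big_ind K) => //; [apply: ideal0 | apply: idealD]. Qed.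

Lemma ideal_subr a b : K a -> K (a - b) -> K b.
Proof. by move=> Ka Kab; rewrite -(subKr a b); apply: idealB. Qed.

End IdealClosure.

Lemma prime_ideal P : is_prime P -> is_ideal P. Proof. by case. Qed.

Definition ideal_cap Is : A -> Prop := fun t => List.Forall (fun I => I t) Is.

Lemma ideal_cap_ideal Is : List.Forall (@is_ideal A) Is -> is_ideal (ideal_cap Is).
Proof.
move=> /List.Forall_forall idIs; split.
- by apply/List.Forall_forall => I /idIs /ideal0.
- move=> a b /List.Forall_forall Ia /List.Forall_forall Ib.
  apply/List.Forall_forall => I II.
  by apply: (idealB (idIs _ II)); [apply: Ia | apply: Ib].
- move=> r a /List.Forall_forall Ia; apply/List.Forall_forall => I II.
  by apply: (idealMl (idIs _ II)); apply: Ia.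
- move=> r a /List.Forall_forall Ia; apply/List.Forall_forall => I II.
  by apply: (idealMr (idIs _ II)); apply: Ia.
Qed.

Lemma Iof_ideal (U : (A -> Prop) -> Prop) : is_ideal (Iof U).
Proof.
split.
- by move=> P _ /prime_ideal/ideal0.
- move=> a b Ia Ib P UP primeP.
  by apply: (idealB (prime_ideal primeP)); [apply: Ia | apply: Ib].
- by move=> r a Ia P UP primeP; apply: (idealMl (prime_ideal primeP)); apply: Ia.
- by move=> r a Ia P UP primeP; apply: (idealMr (prime_ideal primeP)); apply: Ia.
Qed.

Lemma prime_rad_Iof (U : (A -> Prop) -> Prop) : incl (prime_rad (Iof U)) (Iof U).
Proof. by move=> x Ix P UP primeP; apply: Ix => //; split => // y; apply. Qed.

Lemma Iof_VZ_prime Q x : is_prime Q -> Iof (VZ Q) x <-> Q x.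
Proof.
move=> primeQ; split => [IQx | Qx P [_ QP] _]; last exact: QP.
by apply: IQx => //; split.
Qed.

Definition ideal_colon J Z : A -> Prop := fun t => forall p, J p -> Z (p * t).

Lemma ideal_colon_ideal J Z : is_ideal J -> is_ideal Z -> is_ideal (ideal_colon J Z).
Proof.
move=> idJ idZ; split.
- by move=> p _; rewrite mulr0; apply: ideal0.
- by move=> a b Za Zb p Jp; rewrite mulrBr; apply: (idealB idZ); [apply: Za | apply: Zb].
- by move=> r a Za p Jp; rewrite mulrA; apply: Za; apply: (idealMr idJ).
- by move=> r a Za p Jp; rewrite mulrA; apply: (idealMr idZ); apply: Za.
Qed.

Lemma prime_elem P x y : is_prime P -> (forall a, P (x * a * y)) -> P x \/ P y.
Proof.
move=> [idP _ primeP] xAy.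
pose J w := forall a, P (x * a * w).
pose I u := forall w, J w -> P (u * w).
have idJ : is_ideal J.
  split.
  - by move=> a; rewrite mulr0; apply: (ideal0 idP).
  - move=> a b Ja Jb c; rewrite mulrBr.
    exact: (idealB idP (Ja c) (Jb c)).
  - by move=> r a Ja c; rewrite mulrA -(mulrA x); exact: Ja (c * r).
  - by move=> r a Ja c; rewrite mulrA; exact: (idealMr idP _ (Ja c)).
have idI : is_ideal I.
  split.
  - by move=> w _; rewrite mul0r; apply: (ideal0 idP).
  - move=> a b Ia Ib w Jw; rewrite mulrBl.
    exact: (idealB idP (Ia w Jw) (Ib w Jw)).
  - by move=> r a Ia w Jw; rewrite -mulrA; exact: (idealMl idP _ (Ia w Jw)).
  - move=> r a Ia w Jw; rewrite -mulrA; apply: (Ia (r * w)) => c.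
    by rewrite mulrA -(mulrA x); exact: Jw (c * r).
case: (primeP I J idI idJ) => [u w Iu Jw | IP | JP]; first exact: Iu.
  by left; apply: IP => w Jw; have := Jw 1; rewrite mulr1.
by right; exact: JP y xAy.
Qed.

(* [colon_prod [:: I_1; ..; I_n] Z] is the colon ideal (Z : I_1 ⋯ I_n), so
   [prod_sub Is Z], which says that it is all of A, means I_1 ⋯ I_n ⊆ Z. *)
Definition colon_prod Is Z : A -> Prop := foldl (fun Z J => ideal_colon J Z) Z Is.

Definition prod_sub Is Z : Prop := forall y, colon_prod Is Z y.

Lemma colon_prod_mono Is Z Z' : incl Z Z' -> incl (colon_prod Is Z) (colon_prod Is Z').
Proof.
elim: Is Z Z' => [|J Is IH] Z Z' ZZ' //=.
by apply: IH => t Zt p Jp; apply: ZZ'; apply: Zt.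
Qed.

Lemma prod_sub_mono Is Z Z' : incl Z Z' -> prod_sub Is Z -> prod_sub Is Z'.
Proof. by move=> ZZ' IsZ y; apply: colon_prod_mono ZZ' _ (IsZ y). Qed.

Lemma prod_sub_cap Is Z :
  List.Forall (@is_ideal A) Is -> incl (ideal_cap Is) Z -> prod_sub Is Z.
Proof.
elim: Is Z => [|J Is IH] Z; first by move=> _ capZ y; apply: capZ.
move=> /List.Forall_cons_iff[idJ idIs] capZ; apply: IH => // t capt p Jp.
apply: capZ; constructor; first exact: (idealMr idJ).
move/List.Forall_forall: idIs => idIs; move/List.Forall_forall: capt => capt.
by apply/List.Forall_forall => I II; apply: (idealMl (idIs _ II)); apply: capt.
Qed.

Lemma prod_sub_mulr Is Z : prod_sub Is Z -> prod_sub Is (fun z => forall x, Z (z * x)).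
Proof.
elim: Is Z => [|J Is IH] Z IsZ y /=; first by move=> x; apply: IsZ.
apply: colon_prod_mono _ _ (IH _ IsZ y) => z Zz p Jp x.
by rewrite -mulrA; apply: Zz.
Qed.

Lemma prime_prod_sub P Is : is_prime P -> List.Forall (@is_ideal A) Is ->
  prod_sub Is P -> exists2 J, List.In J Is & incl J P.
Proof.
move=> [idP nP1 primeP]; elim: Is => [|J Is IH] /=.
  by move=> _ P_all; case: nP1; apply: P_all.
move=> /List.Forall_cons_iff[idJ idIs] IsP.
have [JP | JnP] := EM (incl J P); first by exists J; [left|].
have JcolonP p t : J p -> ideal_colon J P t -> P (p * t) by move=> Jp; apply.
have [//|colonP] := primeP J _ idJ (ideal_colon_ideal idJ idP) JcolonP.
have [I II IP] := IH idIs (prod_sub_mono colonP IsP).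
by exists I; [right|].
Qed.

Lemma prod_sub_repeat N Z n : is_ideal Z ->
  (forall b : 'I_n -> A, (forall k, N (b k)) -> Z (\prod_(k < n) b k)) ->
  prod_sub (List.repeat N n) Z.
Proof.
move=> idZ Nn_Z.
suff: forall Z', (forall b : 'I_n -> A, (forall k, N (b k)) ->
    forall y, Z' (\prod_(k < n) b k * y)) -> prod_sub (List.repeat N n) Z'.
  by apply=> b Nb y; apply: (idealMr idZ); apply: Nn_Z.
elim: n {Nn_Z} => [|n IH] Z' NZ' y /=.
  move: (NZ' (fun _ => 0)); rewrite big_ord0 => NZ'1.
  by rewrite -[y]mul1r; apply: NZ'1; case.
apply: IH => b Nb t p Np.
pose b' (k : 'I_n.+1) := if unlift ord0 k is Some j then b j else p.
have Nb' k : N (b' k) by rewrite /b'; case: (unlift ord0 k).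
have := NZ' b' Nb' t; rewrite big_ord_recl /b' unlift_none mulrA.
by congr (Z' (_ * _ * _)); apply: eq_bigr => i _; rewrite liftK.
Qed.

End Ideals.

Section Morphisms.
Variables (A B : pzRingType) (g : {rmorphism A -> B}).
Implicit Types (I P Z : B -> Prop) (Is : seq (B -> Prop)).

Lemma contract_ideal I : is_ideal I -> is_ideal (contract g I).
Proof.
move=> idI; split.
- by rewrite /contract rmorph0; apply: ideal0.
- by move=> a b Ia Ib; rewrite /contract rmorphB; apply: idealB.
- by move=> r a Ia; rewrite /contract rmorphM; apply: idealMl.
- by move=> r a Ia; rewrite /contract rmorphM; apply: idealMr.
Qed.

Lemma colon_prod_contract Is Z y :
  colon_prod Is Z (g y) -> colon_prod (List.map (contract g) Is) (contract g Z) y.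
Proof.
elim: Is Z y => [|J Is IH] Z y //= IsZ.
apply: colon_prod_mono _ _ (IH _ _ IsZ) => x Zx p Jp.
by rewrite /contract rmorphM; apply: Zx.
Qed.

Section Surjective.
Hypothesis g_surj : forall t, exists a, g a = t.

Definition img (P : A -> Prop) : B -> Prop := fun t => exists2 a, P a & g a = t.

Lemma img_ideal (I : A -> Prop) : is_ideal I -> is_ideal (img I).
Proof.
move=> idI; split.
- by exists 0; [apply: ideal0 | rewrite rmorph0].
- move=> _ _ [a Ia <-] [b Ib <-].
  by exists (a - b); [apply: idealB | rewrite rmorphB].
- move=> r _ [a Ia <-]; have [c <-] := g_surj r.
  by exists (c * a); [apply: idealMl | rewrite rmorphM].
- move=> r _ [a Ia <-]; have [c <-] := g_surj r.
  by exists (a * c); [apply: idealMr | rewrite rmorphM].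
Qed.

Lemma contract_prime P : is_prime P -> is_prime (contract g P).
Proof.
move=> [idP nP1 primeP]; split; first exact: contract_ideal.
  by rewrite /contract rmorph1.
move=> I J idI idJ IJ_P.
have imgIJ_P s t : img I s -> img J t -> P (s * t).
  by move=> [a Ia <-] [b Jb <-]; rewrite -rmorphM; apply: IJ_P.
have [IP | JP] := primeP _ _ (img_ideal idI) (img_ideal idJ) imgIJ_P.
- by left=> a Ia; apply: IP; exists a.
- by right=> a Ja; apply: JP; exists a.
Qed.

Section KernelInside.
Variables (P : A -> Prop) (idP : is_ideal P) (kerP : forall a, g a = 0 -> P a).

Lemma img_kerP a : img P (g a) -> P a.
Proof.
move=> [p Pp /eqP]; rewrite -subr_eq0 -rmorphB => /eqP/kerP Ppa.
exact: ideal_subr Pp Ppa.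
Qed.

Lemma img_prime : is_prime P -> is_prime (img P).
Proof.
move=> [_ nP1 primeP]; split; first exact: img_ideal.
  by rewrite -(rmorph1 g) => /img_kerP.
move=> I J idI idJ IJ_P.
have IJ_P' a b : contract g I a -> contract g J b -> P (a * b).
  by move=> Ia Jb; apply: img_kerP; rewrite /img rmorphM; apply: IJ_P.
have [IP | JP] := primeP _ _ (contract_ideal idI) (contract_ideal idJ) IJ_P'.
- by left=> t It; have [a ga] := g_surj t; exists a; rewrite // -ga in It; apply: IP.
- by right=> t Jt; have [a ga] := g_surj t; exists a; rewrite // -ga in Jt; apply: JP.
Qed.

End KernelInside.
End Surjective.
End Morphisms.

Section QuotientRing.
Local Open Scope quotient_scope.
Variables (A : pzRingType) (K : A -> Prop) (idK : is_ideal K).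

Definition ideal_pred : {pred A} := fun x => `[< K x >].

Lemma ideal_predP x : reflect (K x) (x \in ideal_pred).
Proof. exact: asboolP. Qed.

Lemma ideal_pred_zmod_closed : zmod_closed ideal_pred.
Proof.
split; first exact/ideal_predP/(ideal0 idK).
by move=> a b /ideal_predP Ka /ideal_predP Kb; apply/ideal_predP/(idealB idK).
Qed.

HB.instance Definition _ := GRing.isZmodClosed.Build A ideal_pred ideal_pred_zmod_closed.

Definition quot := {ideal_quot ideal_pred}.
HB.instance Definition _ := GRing.Zmodule.on quot.
HB.instance Definition _ := Choice.on quot.

Lemma quotP a b : \pi_quot a = \pi_quot b <-> K (a - b).
Proof. by split => [/eqquotP /ideal_predP | /ideal_predP Kab]; [|apply/eqquotP]. Qed.

Definition quot_one : quot := lift_cst quot 1.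
Definition quot_mul := lift_op2 quot *%R.
Canonical pi_quot_one_morph := PiConst quot_one.

Lemma pi_quot_mul : {morph \pi_quot : x y / x * y >-> quot_mul x y}.
Proof.
move=> x y; unlock quot_mul; apply/quotP.
have -> : x * y - repr (\pi_quot x) * repr (\pi_quot y) =
    - ((repr (\pi_quot x) - x) * repr (\pi_quot y) + x * (repr (\pi_quot y) - y)).
  by rewrite mulrBl mulrBr addrA subrK opprB.
apply: (idealN idK); apply: (idealD idK);
  [apply: (idealMr idK) | apply: (idealMl idK)]; by apply/quotP; rewrite reprK.
Qed.
Canonical pi_quot_mul_morph := PiMorph2 pi_quot_mul.

Lemma quot_mulA : associative quot_mul.
Proof. by move=> x y z; rewrite -[x]reprK -[y]reprK -[z]reprK !piE mulrA. Qed.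
Lemma quot_mul1q : left_id quot_one quot_mul.
Proof. by move=> x; rewrite -[x]reprK !piE mul1r. Qed.
Lemma quot_mulq1 : right_id quot_one quot_mul.
Proof. by move=> x; rewrite -[x]reprK !piE mulr1. Qed.
Lemma quot_mulDl : left_distributive quot_mul +%R.
Proof. by move=> x y z; rewrite -[x]reprK -[y]reprK -[z]reprK !piE mulrDl. Qed.
Lemma quot_mulDr : right_distributive quot_mul +%R.
Proof. by move=> x y z; rewrite -[x]reprK -[y]reprK -[z]reprK !piE mulrDr. Qed.

HB.instance Definition _ := GRing.Zmodule_isPzRing.Build quot
  quot_mulA quot_mul1q quot_mulq1 quot_mulDl quot_mulDr.

Definition quot_pi (a : A) : quot := \pi_quot a.

Lemma quot_pi_nmod_morphism : nmod_morphism quot_pi.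
Proof. by split => [|x y]; rewrite /quot_pi piE. Qed.
Lemma quot_pi_monoid_morphism : monoid_morphism quot_pi.
Proof. by split => [|x y]; rewrite /quot_pi piE. Qed.
HB.instance Definition _ :=
  GRing.isNmodMorphism.Build A quot quot_pi quot_pi_nmod_morphism.
HB.instance Definition _ :=
  GRing.isMonoidMorphism.Build A quot quot_pi quot_pi_monoid_morphism.

Lemma quot_pi_surj (t : quot) : exists a, quot_pi a = t.
Proof. by exists (repr t); apply: reprK. Qed.

Lemma quot_pi_eq0 a : quot_pi a = 0 <-> K a.
Proof. by rewrite -(rmorph0 quot_pi) /quot_pi quotP subr0. Qed.

End QuotientRing.

Section Annihilators.
Variable A : pzRingType.
Implicit Types (I J : A -> Prop) (t z : A).

Lemma acc_ann_maximal (ann : (A -> Prop) -> A -> Prop) (X : Type) (Pr : X -> Prop)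
    (F : X -> A -> Prop) x0 :
  acc_ann ann -> (forall x, Pr x -> exists Y, forall t, F x t <-> ann Y t) -> Pr x0 ->
  exists2 x, Pr x & forall y, Pr y -> incl (F x) (F y) -> incl (F y) (F x).
Proof.
move=> acc annF Prx0; apply: contrapT => no_max.
have step (x : {x | Pr x}) : {y : {x | Pr x} |
    incl (F (sval x)) (F (sval y)) /\ ~ incl (F (sval y)) (F (sval x))}.
  apply: cid; case: x => x Prx; apply: contrapT => no_succ.
  apply: no_max; exists x => // y Pry Fxy; apply: contrapT => Fyx.
  by apply: no_succ; exists (exist _ y Pry).
pose fix chain n : {x | Pr x} :=
  if n is n'.+1 then sval (step (chain n')) else exist _ x0 Prx0.
have [N stable] := acc (fun n => F (sval (chain n)))
  (fun n => annF _ (svalP (chain n))) (fun n => (svalP (step (chain n))).1).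
exact: (svalP (step (chain N))).2 (stable N.+1 (leqnSn N)).
Qed.

Lemma right_ann_ideal I : is_ideal I -> is_ideal (right_ann I).
Proof.
move=> idI; split.
- by move=> x _; rewrite mulr0.
- by move=> a b Ia Ib x Ix; rewrite mulrBr Ia ?Ib ?subr0.
- by move=> r a Ia x Ix; rewrite mulrA Ia //; apply: idealMr.
- by move=> r a Ia x Ix; rewrite mulrA Ia ?mul0r.
Qed.

Definition has_nonzero I : Prop := exists2 z, I z & z <> 0.

Section Semiprime.
Hypothesis semiA : semiprime_ring A.

Lemma semiprime_eq0 z : (forall a, z * a * z = 0) -> z = 0.
Proof.
move=> zAz; apply: semiA => P [primeP _] _.
have P_zAz a : P (z * a * z) by rewrite zAz; apply: ideal0 (prime_ideal primeP).
by case: (prime_elem primeP P_zAz).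
Qed.

Lemma right_ann_left_ann I t : is_ideal I -> right_ann I t <-> left_ann I t.
Proof.
move=> idI; split=> It x Ix; apply: semiprime_eq0 => a.
  have -> : t * x * a * (t * x) = t * ((x * a) * t) * x by rewrite !mulrA.
  by rewrite It ?mulr0 ?mul0r //; apply: idealMr.
have -> : x * t * a * (x * t) = x * (t * (a * x)) * t by rewrite !mulrA.
by rewrite It ?mulr0 ?mul0r //; apply: idealMl.
Qed.

Lemma right_ann_cap_eq0 I z : is_ideal I -> I z -> right_ann I z -> z = 0.
Proof.
by move=> idI Iz annz; apply: semiprime_eq0 => a; rewrite annz //; apply: idealMr.
Qed.

Lemma acc_right_ann_maximal (X : Type) (Pr : X -> Prop) (F : X -> A -> Prop) x0 :
  acc_ann (@right_ann A) \/ acc_ann (@left_ann A) ->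
  (forall x, Pr x -> exists2 Y, is_ideal Y & forall t, F x t <-> right_ann Y t) ->
  Pr x0 ->
  exists2 x, Pr x & forall y, Pr y -> incl (F x) (F y) -> incl (F y) (F x).
Proof.
move=> [acc|acc] annF; apply: (acc_ann_maximal acc) => x Prx;
  have [Y idY FY] := annF x Prx; exists Y => // t.
by rewrite FY; apply: right_ann_left_ann.
Qed.

Lemma right_ann_prime I : is_ideal I -> has_nonzero I ->
  (forall J, is_ideal J -> incl J I -> has_nonzero J ->
     incl (right_ann I) (right_ann J) -> incl (right_ann J) (right_ann I)) ->
  is_prime (right_ann I).
Proof.
move=> idI [z Iz z0] maxI; split; first exact: right_ann_ideal.
  by move=> ann1; apply: z0; rewrite -[z]mulr1; apply: ann1.
move=> B C idB idC BC_ann.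
have [|/existsNP[b /not_implyP[Bb nIb]]] := EM (incl B (right_ann I)); first by left.
right; move/existsNP: nIb => [x /not_implyP[Ix xb0]].
pose I' u := I u /\ forall c, C c -> u * c = 0.
have idI' : is_ideal I'.
  split.
  - by split; [apply: ideal0 | move=> c _; rewrite mul0r].
  - move=> u v [Iu uC] [Iv vC]; split; first exact: idealB.
    by move=> c Cc; rewrite mulrBl uC ?vC ?subr0.
  - move=> r u [Iu uC]; split; first exact: idealMl.
    by move=> c Cc; rewrite -mulrA uC ?mulr0.
  - move=> r u [Iu uC]; split; first exact: idealMr.
    by move=> c Cc; rewrite -mulrA uC //; apply: idealMl.
have I'_nz : has_nonzero I'.
  exists (x * b) => //; split; first exact: idealMr.
  by move=> c Cc; rewrite -mulrA; apply: BC_ann.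
have annI'_I := maxI I' idI' (fun u I'u => I'u.1) I'_nz (fun t It u I'u => It u I'u.1).
by move=> c Cc; apply: annI'_I => u [_ uC]; apply: uC.
Qed.

(* Choose L maximising the right annihilator of M L, the intersection of the
   primes r.ann(I), I in L.  If M L <> 0, an ideal I <= M L with maximal right
   annihilator yields a further prime r.ann(I); maximality of L then forces
   M L <= r.ann(I), whence I^2 = 0, contradicting semiprimeness. *)
Lemma semiprime_finite_primes : acc_ann (@right_ann A) \/ acc_ann (@left_ann A) ->
  exists2 Ps, List.Forall (@is_prime A) Ps & forall x, ideal_cap Ps x -> x = 0.
Proof.
move=> acc.
pose good I := is_ideal I /\ is_prime (right_ann I).
pose M L := ideal_cap (List.map (@right_ann A) L).
have idM L : List.Forall good L -> is_ideal (M L).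
  move=> goodL; apply: ideal_cap_ideal; apply/List.Forall_map.
  by apply: List.Forall_impl goodL => I [_ /prime_ideal].
have [L goodL maxL] : exists2 L, List.Forall good L & forall L', List.Forall good L' ->
    incl (right_ann (M L)) (right_ann (M L')) ->
    incl (right_ann (M L')) (right_ann (M L)).
  apply: acc_right_ann_maximal acc _ (List.Forall_nil good) => L goodL.
  by exists (M L); first exact: idM.
have [[z Mz z0] | M0] := EM (has_nonzero (M L)); last first.
  exists (List.map (@right_ann A) L).
    by apply/List.Forall_map; apply: List.Forall_impl goodL => I [].
  by move=> x Mx; apply: contrapT => x0; apply: M0; exists x.
have [I [idI IM I_nz] maxI] :
    exists2 I, [/\ is_ideal I, incl I (M L) & has_nonzero I] & forall J,
      [/\ is_ideal J, incl J (M L) & has_nonzero J] ->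
      incl (right_ann I) (right_ann J) -> incl (right_ann J) (right_ann I).
  apply: acc_right_ann_maximal acc _ (And3 (idM L goodL) (fun x Mx => Mx) _).
    by move=> I [idI _ _]; exists I.
  by exists z.
have primeI : is_prime (right_ann I).
  apply: right_ann_prime => // J idJ JI J_nz; apply: maxI; split => //.
  by move=> x /JI; apply: IM.
have goodIL : List.Forall good (I :: L) by constructor.
have annM : incl (right_ann (M (I :: L))) (right_ann (M L)).
  by apply: (maxL _ goodIL) => t annt m /List.Forall_cons_iff[_ Mm]; apply: annt.
have M_annI : incl (M L) (right_ann I).
  move=> t Mt x Ix.
  have x_ann : right_ann (M (I :: L)) x.
    apply/(right_ann_left_ann _ (idM _ goodIL)) => m /List.Forall_cons_iff[annIm _].
    exact: annIm x Ix.
  by move: (annM x x_ann) => /(right_ann_left_ann _ (idM _ goodL)); apply.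
have [w Iw] := I_nz; case; apply: (right_ann_cap_eq0 idI Iw).
by apply: M_annI; apply: IM.
Qed.

End Semiprime.
End Annihilators.

Section FactorRings.
Variables (A : pzRingType) (K : A -> Prop) (idK : is_ideal K).
Let pi : {rmorphism A -> quot idK} := quot_pi idK.
Let pi_surj : forall t, exists a, pi a = t := @quot_pi_surj _ _ idK.
Let pi_eq0 a : pi a = 0 <-> K a := quot_pi_eq0 idK a.

Lemma contract_pi_VZ (P : quot idK -> Prop) : is_prime P -> VZ K (contract pi P).
Proof.
move=> primeP; split; first exact: (contract_prime pi_surj primeP).
by move=> x /pi_eq0 pix0; rewrite /contract pix0; apply: ideal0 (prime_ideal primeP).
Qed.

Lemma quot_semiprime : incl (prime_rad K) K -> semiprime_ring (quot idK).
Proof.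
move=> radK t; have [a <- rad_a] := pi_surj t; apply/pi_eq0.
apply: radK => P [primeP KP] _.
have kerP b : pi b = 0 -> P b by move/pi_eq0/KP.
have primePi := img_prime pi_surj (prime_ideal primeP) kerP primeP.
apply: (img_kerP (prime_ideal primeP) kerP); apply: (rad_a _ _ primePi); split=> // _ ->.
by exists 0; [apply: ideal0 (prime_ideal primeP) | rewrite rmorph0].
Qed.

Lemma semiprime_ideal_primes : semiprime_factors_goldie A -> incl (prime_rad K) K ->
  exists2 Ps, List.Forall (VZ K) Ps & prod_sub Ps K.
Proof.
move=> goldA radK; have semiQ := quot_semiprime radK.
have [Ls primeLs capLs0] := semiprime_finite_primes semiQ
  (match goldA _ _ pi_surj semiQ with
   | or_introl (conj _ acc) => or_intror acc
   | or_intror (conj _ acc) => or_introl acc end).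
exists (List.map (contract pi) Ls).
  by apply/List.Forall_map; apply: List.Forall_impl primeLs => P; apply: contract_pi_VZ.
apply: prod_sub_cap => [|x /List.Forall_map capx].
  apply/List.Forall_map; apply: List.Forall_impl primeLs => P.
  by move/prime_ideal/contract_ideal.
exact/pi_eq0/capLs0.
Qed.

Lemma prime_rad_nilpotent : factors_nilpotent_radical A ->
  exists n, prod_sub (List.repeat (prime_rad K) n) K.
Proof.
move=> nilA; have [n [_ nilQ]] := nilA _ _ pi_surj.
exists n; apply: prod_sub_repeat idK _ => b radb.
apply/pi_eq0; rewrite rmorph_prod; apply: nilQ => k P [primeP _] _.
by have VZP := contract_pi_VZ primeP; apply: (radb k _ VZP VZP.1).
Qed.

End FactorRings.

Section Extension.
Variables (R S : pzRingType) (f : {rmorphism R -> S}).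
Implicit Types (I J Q : R -> Prop) (Qs : seq (R -> Prop)).

Lemma left_gen0 J : left_gen f J 0.
Proof. by exists 0%N, (fun _ => 0), (fun _ => 0); split => [[]//|]; rewrite big_ord0. Qed.

Lemma left_gen_mul J s i : J i -> left_gen f J (s * f i).
Proof. by move=> Ji; exists 1%N, (fun _ => s), (fun _ => i); rewrite big_ord1. Qed.

Lemma left_genD J x y : left_gen f J x -> left_gen f J y -> left_gen f J (x + y).
Proof.
move=> [n [s [i [Ji ->]]]] [m [s' [i' [Ji' ->]]]].
exists (n + m)%N, (fun k => match split k with inl a => s a | inr b => s' b end),
  (fun k => match split k with inl a => i a | inr b => i' b end).
split; first by move=> k; case: (split k).
rewrite big_split_ord /=; congr (_ + _); apply: eq_bigr => k _.
  by rewrite -[lshift _ _]/(unsplit (inl k)) unsplitK.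
by rewrite -[rshift _ _]/(unsplit (inr k)) unsplitK.
Qed.

Lemma left_genMl J r x : left_gen f J x -> left_gen f J (r * x).
Proof.
move=> [n [s [i [Ji ->]]]]; exists n, (fun k => r * s k), i; split => //.
by rewrite mulr_sumr; apply: eq_bigr => k _; rewrite mulrA.
Qed.

Lemma left_genN J x : left_gen f J x -> left_gen f J (- x).
Proof. by move=> Jx; rewrite -mulN1r; apply: left_genMl. Qed.

Lemma left_gen_sum J n (F : 'I_n -> S) :
  (forall k, left_gen f J (F k)) -> left_gen f J (\sum_(k < n) F k).
Proof.
by move=> JF; apply: (big_ind (left_gen f J)) => //; [apply: left_gen0 | apply: left_genD].
Qed.

Lemma left_gen_mono J J' : incl J J' -> incl (left_gen f J) (left_gen f J').
Proof. by move=> JJ' x [n [s [i [Ji ->]]]]; exists n, s, i; split=> // k; apply: JJ'. Qed.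

Lemma left_gen_all J x : (forall r, J r) -> left_gen f J x.
Proof. by move=> Jall; rewrite -[x]mulr1 -(rmorph1 f); apply: left_gen_mul. Qed.

Lemma left_gen_contract (P : S -> Prop) :
  is_ideal P -> incl (left_gen f (contract f P)) P.
Proof.
move=> idP x [n [s [i [Pi ->]]]].
by apply: (ideal_sum idP) => k; apply: (idealMl idP); apply: Pi.
Qed.

Lemma ext_ideal_ideal J : is_ideal (ext_ideal f J).
Proof.
split.
- by move=> x; rewrite mul0r; apply: left_gen0.
- by move=> a b Ja Jb x; rewrite mulrBl; apply: left_genD (Ja x) _; apply: left_genN.
- by move=> r a Ja x; rewrite -mulrA; apply: left_genMl.
- by move=> r a Ja x; rewrite -mulrA.
Qed.

Lemma ext_ideal_mono J J' : incl J J' -> incl (ext_ideal f J) (ext_ideal f J').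
Proof. by move=> JJ' s Js x; apply: left_gen_mono JJ' _ (Js x). Qed.

Lemma ext_contract (P : S -> Prop) : is_ideal P -> incl (ext_ideal f (contract f P)) P.
Proof. by move=> idP s Ps; rewrite -[s]mulr1; apply: left_gen_contract (Ps 1). Qed.

Lemma ext_ideal_mul_colon Q J s w :
  ext_ideal f Q s -> left_gen f (ideal_colon Q J) w -> left_gen f J (s * w).
Proof.
move=> Q_s [n [u [t [QJt ->]]]]; rewrite mulr_sumr; apply: left_gen_sum => k.
have [m [v [q [Qq suk]]]] := Q_s (u k).
rewrite mulrA suk mulr_suml; apply: left_gen_sum => j.
by rewrite -mulrA -rmorphM; apply: left_gen_mul; apply: QJt.
Qed.

Lemma colon_prod_ext Qs J y : left_gen f (colon_prod Qs J) y ->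
  colon_prod (List.map (ext_ideal f) Qs) (left_gen f J) y.
Proof.
elim: Qs J y => [|Q Qs IH] J y //= Jy.
apply: colon_prod_mono _ _ (IH _ _ Jy) => w Jw s Qs_s.
exact: ext_ideal_mul_colon Qs_s Jw.
Qed.

Lemma prod_sub_ext Qs J :
  prod_sub Qs J -> prod_sub (List.map (ext_ideal f) Qs) (ext_ideal f J).
Proof.
move=> QsJ; apply: prod_sub_mulr => y.
by apply: colon_prod_ext; apply: left_gen_all.
Qed.

End Extension.

Section Adjunction.
Variables (R S : pzRingType) (f : {rmorphism R -> S}).

Definition ext_sub_prime_rad : Prop :=
  forall (P : S -> Prop) (Q : R -> Prop), is_prime P -> is_prime Q ->
    incl (ext_ideal f Q) P -> incl Q (prime_rad (contract f P)).

Lemma adjoint_ext_sub_prime_rad : left_adjoint_lam_rho f -> ext_sub_prime_rad.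
Proof.
move=> adj P Q primeP primeQ QSP x Qx Q' [primeQ' PQ'] _.
have VP_rhoVQ P' : VZ P P' -> rho f (VZ Q) P'.
  move=> [primeP' PP']; split=> // s IQs; apply: PP'; apply: QSP.
  by apply: ext_ideal_mono IQs => y /(Iof_VZ_prime _ primeQ).
have lamVP_Q' : lam f (VZ P) Q'.
  by split=> // r IPr; apply: PQ'; apply/(Iof_VZ_prime _ primeP).
have [_ QQ'] := (adj _ _ (ex_intro _ P (fun _ => iff_refl _))
  (ex_intro _ Q (fun _ => iff_refl _))).2 VP_rhoVQ Q' lamVP_Q'.
exact: QQ'.
Qed.

Lemma lam_sub_rho : factors_nilpotent_radical R ->
  forall U V, closed_spec U ->
    (forall Q, lam f U Q -> V Q) -> forall P, U P -> rho f V P.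
Proof.
move=> nilR U V [X UX] lamUV P UP; have primeP : is_prime P by case/UX: UP.
split=> //; have idP := prime_ideal primeP.
have IV_rad : incl (Iof V) (prime_rad (contract f P)).
  move=> x IVx Q [primeQ PQ] _; apply: (IVx Q _ primeQ); apply: lamUV.
  by split=> // r IUr; apply: PQ; apply: IUr.
have [n radn] := prime_rad_nilpotent (contract_ideal f idP) nilR.
have := prod_sub_mono (ext_contract idP) (prod_sub_ext f radn).
rewrite List.map_repeat => radSn_P.
set N := prime_rad (contract f P) in IV_rad radSn_P *.
have ideals : List.Forall (@is_ideal S) (List.repeat (ext_ideal f N) n).
  by apply/List.Forall_forall => E /(List.repeat_spec _ _ _) ->; apply: ext_ideal_ideal.
have [E /(List.repeat_spec _ _ _) -> radS_P] := prime_prod_sub primeP ideals radSn_P.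
by move=> s /(ext_ideal_mono IV_rad); apply: radS_P.
Qed.

Lemma rho_sub_lam : ext_sub_prime_rad ->
  semiprime_factors_goldie R -> semiprime_factors_goldie S ->
  forall U V, closed_spec V ->
    (forall P, U P -> rho f V P) -> forall Q, lam f U Q -> V Q.
Proof.
move=> primeC goldR goldS U V [Y VY] U_rhoV Q [primeQ IU_Q].
apply/VY; split=> //; suff IV_Q : incl (Iof V) Q.
  by move=> y Yy; apply: IV_Q => P /VY[_ YP] _; apply: YP.
have [Ps /List.Forall_forall VZ_Ps Ps_IU] :=
  semiprime_ideal_primes (Iof_ideal U) goldS (@prime_rad_Iof _ U).
have idPs : List.Forall (@is_ideal R) (List.map (contract f) Ps).
  apply/List.Forall_forall => _ /List.in_map_iff[P [<- PPs]].
  by apply: contract_ideal; apply: prime_ideal (VZ_Ps P PPs).1.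
have PsR_Q : prod_sub (List.map (contract f) Ps) Q.
  by move=> y; apply: colon_prod_mono IU_Q _ (colon_prod_contract (Ps_IU (f y))).
have [_ /List.in_map_iff[P [<- PPs]] PR_Q] := prime_prod_sub primeQ idPs PsR_Q.
have [primeP IU_P] := VZ_Ps P PPs.
have [Qs /List.Forall_forall VZ_Qs Qs_IV] :=
  semiprime_ideal_primes (Iof_ideal V) goldR (@prime_rad_Iof _ V).
have idQs : List.Forall (@is_ideal S) (List.map (ext_ideal f) Qs).
  by apply/List.Forall_forall => _ /List.in_map_iff[Q' [<- _]]; apply: ext_ideal_ideal.
have QsS_P : prod_sub (List.map (ext_ideal f) Qs) P.
  apply: prod_sub_mono (prod_sub_ext f Qs_IV) => s IVs; apply: IU_P => P' UP' _.
  by apply: (U_rhoV P' UP').2.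
have [_ /List.in_map_iff[Q' [<- Q'Qs]] Q'S_P] := prime_prod_sub primeP idQs QsS_P.
have [primeQ' IV_Q'] := VZ_Qs Q' Q'Qs.
move=> x /IV_Q' Q'x.
exact: (primeC P Q' primeP primeQ' Q'S_P x Q'x Q (conj primeQ PR_Q)).
Qed.

End Adjunction.

Theorem lemma3p13 (R S : pzRingType) (f : {rmorphism R -> S}) :
  injective f ->
  semiprime_factors_goldie R -> semiprime_factors_goldie S ->
  factors_nilpotent_radical R -> factors_nilpotent_radical S ->
  (left_adjoint_lam_rho f <->
   (forall (P : S -> Prop) (Q : R -> Prop), is_prime P -> is_prime Q ->
      incl (ext_ideal f Q) P -> incl Q (prime_rad (contract f P)))).
Proof.
move=> _ goldR goldS nilR _; split; first exact: adjoint_ext_sub_prime_rad.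
move=> primeC U V closedU closedV; split.
- exact: lam_sub_rho nilR U V closedU.
- exact: rho_sub_lam primeC goldR goldS U V closedV.
Qed.
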